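(* Let $d\ge 7$ and let $G$ be a $d$-regular graph with girth $g(G)=5$. If there exists a vertex of $G$ that lies on no cycle of length $6$ in $G$, then $\chi_b(G)=d+1$.
   Context: The girth $g(G)$ is the length of a shortest cycle of $G$. A proper $k$-coloring $c:V(G)\to\{1,\dots,k\}$ is a b-coloring if every color class contains a vertex $v$ whose closed neighborhood $N[v]$ contains all $k$ colors. The b-chromatic number $\chi_b(G)$ is the largest $k$ such that $G$ admits a b-coloring with $k$ colors. *)

From mathcomp Require Import all_boot all_order.
Set Implicit Arguments. Unset Strict Implicit. Unset Printing Implicit Defensive.

Definition simple_graph (T : finType) (e : rel T) : Prop :=
  symmetric e /\ irreflexive e.

Definition regular (T : finType) (e : rel T) (d : nat) : Prop :=
  forall x : T, #|[set y | e x y]| = d.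

Definition is_cycle (T : finType) (e : rel T) (s : seq T) : bool :=
  [&& 3 <= size s, uniq s & cycle e s].

Definition has_cycle_of_length (T : finType) (e : rel T) (k : nat) : Prop :=
  exists s : seq T, is_cycle e s /\ size s = k.

Definition girth_eq (T : finType) (e : rel T) (g : nat) : Prop :=
  has_cycle_of_length e g /\
  forall k, has_cycle_of_length e k -> g <= k.

Definition closed_nbhd (T : finType) (e : rel T) (v : T) : {set T} :=
  [set u | (u == v) || e v u].

Definition proper_coloring (T : finType) (e : rel T) (k : nat)
  (c : {ffun T -> 'I_k}) : bool :=
  [forall x, forall y, e x y ==> (c x != c y)].

Definition b_coloring (T : finType) (e : rel T) (k : nat)
  (c : {ffun T -> 'I_k}) : bool :=
  proper_coloring e c &&
  [forall i : 'I_k, exists v, (c v == i) &&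
      [forall j : 'I_k, exists u, (u \in closed_nbhd e v) && (c u == j)]].

Definition has_b_coloring (T : finType) (e : rel T) (k : nat) : bool :=
  [exists c : {ffun T -> 'I_k}, b_coloring e c].

(* b-chromatic number: largest k admitting a b-coloring.  Any b-coloring with
   k colours has k nonempty colour classes, so k <= #|T|; hence the maximum
   may be taken over k < #|T|.+1. *)
Definition b_chromatic (T : finType) (e : rel T) : nat :=
  \max_(k < #|T|.+1 | has_b_coloring e k) k.

From mathcomp Require Import all_boot all_order all_fingroup zify.
Set Implicit Arguments. Unset Strict Implicit. Unset Printing Implicit Defensive.

(* Fix a vertex v on no 6-cycle, with neighbourhood N(v) and second
   neighbourhood W.  It suffices to color N[v] and W with d+1 colors so that
   every closed neighbourhood N[x], x in N[v], is rainbow and no edge inside W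
   is monochromatic: any proper extension (greedy, as the degree is d) is then a
   b-coloring, every vertex of N[v] being a b-vertex, and d+1 is an upper bound.
   Girth 5 gives each w in W a unique parent in N(v), and since v lies on no
   6-cycle, W induces a matching.  A monochromatic edge ab in W, with a a child
   of u, is removed by swapping the colors of a and a sibling a' having no
   W-neighbour of color c = col a: siblings that do have one are mapped
   injectively, through the parent of that neighbour, into N(v) minus u and the
   neighbour of v colored c, so at most d-2 of the d-1 siblings are blocked. *)

Section FiniteInjections.

Lemma in_inj_ord_surj (T : finType) n (f : T -> 'I_n) (A : {set T}) :
  {in A &, injective f} -> #|A| = n -> forall j, exists2 x, x \in A & f x = j.
Proof.
move=> injf cardA j.
have fA : f @: A = setT.
  by apply/eqP; rewrite eqEcard subsetT cardsT card_ord card_in_imset // cardA /=.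
have /imsetP[x xA ->] : j \in f @: A by rewrite fA inE.
by exists x.
Qed.

Variables (T R : finType) (r0 : R).

Definition set_embed (A : {set T}) (C : {set R}) (x : T) : R :=
  nth r0 (enum C) (index x (enum A)).

Lemma set_embed_index_lt (A : {set T}) (C : {set R}) x :
  #|A| <= #|C| -> x \in A -> index x (enum A) < size (enum C).
Proof.
by move=> AleC xA; rewrite -cardE; apply: leq_trans AleC; rewrite cardE index_mem mem_enum.
Qed.

Lemma set_embed_in (A : {set T}) (C : {set R}) x :
  #|A| <= #|C| -> x \in A -> set_embed A C x \in C.
Proof. by move=> AleC xA; rewrite -mem_enum mem_nth // set_embed_index_lt. Qed.

Lemma set_embed_inj (A : {set T}) (C : {set R}) :
  #|A| <= #|C| -> {in A &, injective (set_embed A C)}.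
Proof.
move=> AleC x y xA yA /eqP.
rewrite nth_uniq ?enum_uniq ?set_embed_index_lt // => /eqP eq_index.
by rewrite -(nth_index x (_ : x \in enum A)) ?mem_enum // eq_index nth_index ?mem_enum.
Qed.

Lemma injective_setU1 (f : T -> R) (A : {set T}) a :
  {in A &, injective f} -> (forall y, y \in A -> f y != f a) ->
  {in a |: A &, injective f}.
Proof.
move=> injf fa x y; rewrite !inE => /predU1P[->|xA] /predU1P[->|yA] //.
- by move/esym/eqP; rewrite (negbTE (fa y yA)).
- by move/eqP; rewrite (negbTE (fa x xA)).
- exact: injf.
Qed.

Lemma injective_tperm (f : T -> R) (A : {set T}) a a' :
  {in A &, injective f} -> (a \in A) = (a' \in A) ->
  {in A &, injective (f \o tperm a a')}.
Proof.
move=> injf aA x y xA yA /=.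
have tpermA z : z \in A -> tperm a a' z \in A.
  by case: tpermP => [->|->|//]; rewrite ?aA // -aA.
by move/injf => /(_ (tpermA x xA) (tpermA y yA)) /perm_inj.
Qed.

End FiniteInjections.

Section Colorings.
Variables (T : finType) (e : rel T).

Definition nbhd (x : T) : {set T} := [set y | e x y].

Lemma closed_nbhdE x : closed_nbhd e x = x |: nbhd x.
Proof. by apply/setP => y; rewrite !inE. Qed.

Lemma card_closed_nbhd d x :
  irreflexive e -> regular e d -> #|closed_nbhd e x| = d.+1.
Proof. by move=> irr reg; rewrite closed_nbhdE cardsU1 inE irr reg. Qed.

Lemma b_coloring_le k m :
  (forall x, #|closed_nbhd e x| <= m) -> has_b_coloring e k -> k <= m.
Proof.
move=> le_m /existsP[c /andP[_ /forallP b_vertex]].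
case: k c b_vertex => [//|k] c /(_ ord0) /existsP[w /andP[_ /forallP rainbow_w]].
have allc : [set: 'I_k.+1] \subset c @: closed_nbhd e w.
  apply/subsetP => j _; have /existsP[u /andP[uN /eqP <-]] := rainbow_w j.
  exact: imset_f.
rewrite -[k.+1]card_ord -cardsT (leq_trans (subset_leq_card allc)) //.
exact: leq_trans (leq_imset_card _ _) (le_m w).
Qed.

Lemma b_coloring_of_rainbow k (c : {ffun T -> 'I_k}) v :
  proper_coloring e c -> (forall x, #|closed_nbhd e x| = k) ->
  (forall w, w \in closed_nbhd e v -> {in closed_nbhd e w &, injective c}) ->
  b_coloring e c.
Proof.
move=> proper_c card_k rainbow; rewrite /b_coloring proper_c.
apply/forallP => i.
have vN : v \in closed_nbhd e v by rewrite inE eqxx.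
have [w wN <-] := in_inj_ord_surj (rainbow v vN) (card_k v) i.
apply/existsP; exists w; rewrite eqxx; apply/forallP => j.
have [u uN <-] := in_inj_ord_surj (rainbow w wN) (card_k w) j.
by apply/existsP; exists u; rewrite uN eqxx.
Qed.

Hypotheses (sym : symmetric e) (irr : irreflexive e).
Variable d : nat.
Hypothesis max_deg : forall x, #|nbhd x| <= d.

Lemma proper_extend1 (S : {set T}) (p : T -> 'I_d.+1) x : x \notin S ->
  {in S &, forall y z, e y z -> p y != p z} ->
  exists2 p' : T -> 'I_d.+1, {in x |: S &, forall y z, e y z -> p' y != p' z}
                           & {in S, p' =1 p}.
Proof.
move=> xS proper_p.
have few_used : #|p @: (nbhd x :&: S)| < #|[set: 'I_d.+1]|.
  rewrite cardsT card_ord ltnS (leq_trans (leq_imset_card _ _)) //.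
  exact: leq_trans (subset_leq_card (subsetIl _ _)) (max_deg x).
have [k k_free] : exists k, k \notin p @: (nbhd x :&: S).
  apply/existsP; apply: contraTT few_used => /existsPn used.
  by rewrite -leqNgt subset_leq_card //; apply/subsetP => k _; apply/negPn/used.
have k_neq y : y \in S -> e x y -> k != p y.
  by move=> yS xy; apply: contraNneq k_free => ->; rewrite imset_f // !inE xy.
have S_neq y : y \in S -> (y == x) = false by move=> yS; apply: contraNF xS => /eqP <-.
exists (fun y => if y == x then k else p y) => [y z|y yS]; last by rewrite S_neq.
rewrite !inE => /predU1P[->|yS] /predU1P[->|zS] yz; rewrite ?eqxx ?S_neq //.
- by rewrite irr in yz.
- exact: k_neq.
- by rewrite eq_sym k_neq // sym.
- exact: proper_p.
Qed.

Lemma proper_extend (S : {set T}) (p : T -> 'I_d.+1) :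
  {in S &, forall y z, e y z -> p y != p z} ->
  exists c : {ffun T -> 'I_d.+1}, proper_coloring e c /\ {in S, c =1 p}.
Proof.
move: {2}#|~: S| (erefl #|~: S|) => n; elim: n S p => [|n IH] S p cardSC proper_p.
  have inS x : x \in S by apply: contraT; rewrite -in_setC (card0_eq cardSC).
  exists [ffun x => p x]; split=> [|x _]; last by rewrite ffunE.
  by apply/forallP => x; apply/forallP => y; apply/implyP; rewrite !ffunE; apply: proper_p.
have [x xSC] : exists x, x \in ~: S by apply/card_gt0P; rewrite cardSC.
have xS : x \notin S by rewrite -in_setC.
have [p' proper_p' p'_S] := proper_extend1 xS proper_p.
have [|c [proper_c c_xS]] := IH (x |: S) p' _ proper_p'.
  have -> : ~: (x |: S) = ~: S :\ x by apply/setP => y; rewrite !inE negb_or.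
  by move: cardSC; rewrite (cardsD1 x) xSC => -[].
by exists c; split=> // y yS; rewrite c_xS ?p'_S // in_setU1 yS orbT.
Qed.
End Colorings.

Ltac solve_distinct :=
  repeat match goal with H : is_true (?x != ?y) |- _ =>
    try rewrite (negbTE H); try rewrite [y == x]eq_sym (negbTE H); clear H end;
  done.

Section SecondNeighbourhood.
Variables (T : finType) (e : rel T).
Hypotheses (sym : symmetric e) (irr : irreflexive e).
Hypothesis no_short_cycle : forall k, has_cycle_of_length e k -> 5 <= k.

Lemma adj_neq x y : e x y -> x != y.
Proof. by apply: contraTneq => ->; rewrite irr. Qed.

Lemma no_triangle a b c : e a b -> e b c -> e c a -> False.
Proof.
move=> ab bc ca; suff /no_short_cycle : has_cycle_of_length e 3 by [].
exists [:: a; b; c]; split=> //.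
move: (adj_neq ab) (adj_neq bc) (adj_neq ca).
rewrite /is_cycle /= ab bc ca !inE !negb_or /= => *; solve_distinct.
Qed.

Lemma common_nbr_unique x y a b :
  x != y -> e x a -> e a y -> e x b -> e b y -> a = b.
Proof.
move=> xy xa ay xb yb; apply/eqP; apply: contraT => ab.
suff /no_short_cycle : has_cycle_of_length e 4 by [].
exists [:: x; a; y; b]; split=> //.
move: (adj_neq xa) (adj_neq ay) (adj_neq xb) (adj_neq yb).
rewrite /is_cycle /= xa ay (sym y b) yb (sym b x) xb !inE !negb_or /= => *.
solve_distinct.
Qed.

Variable v : T.

Definition second_nbhd : {set T} :=
  [set x | [&& x != v, ~~ e v x & [exists u, e v u && e u x]]].

Definition parent (x : T) : option T := [pick u | e v u && e u x].

Lemma second_nbhdP x :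
  reflect [/\ x != v, ~~ e v x & exists2 u, e v u & e u x] (x \in second_nbhd).
Proof.
rewrite inE; apply: (iffP and3P) => [[-> -> /existsP[u /andP[vu ux]]]|[-> -> [u vu ux]]].
  by split=> //; exists u.
by split=> //; apply/existsP; exists u; rewrite vu.
Qed.

Lemma child_in_second_nbhd u w : e v u -> e u w -> w != v -> w \in second_nbhd.
Proof.
move=> vu uw wv; apply/second_nbhdP; split=> //; last by exists u.
by apply/negP => vw; apply: (no_triangle vu uw); rewrite sym.
Qed.

Lemma parentP u x : e v u -> e u x -> x != v -> parent x = Some u.
Proof.
move=> vu ux xv; rewrite /parent; case: pickP => [u' /andP[vu' u'x]|/(_ u)].
  by rewrite (common_nbr_unique xv (_ : e x u') (_ : e u' v) (_ : e x u) (_ : e u v)) // sym.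
by rewrite vu ux.
Qed.

Lemma second_nbhd_closed_nbhd u w x :
  e v u -> e u w -> w \in second_nbhd -> x \in closed_nbhd e v ->
  w \in closed_nbhd e x -> x = u.
Proof.
move=> vu uw /second_nbhdP[wv nvw _]; rewrite !inE => /predU1P[->|vx].
  by rewrite (negbTE wv) (negbTE nvw).
case/predU1P => [wx|xw]; first by rewrite wx vx in nvw.
by rewrite (common_nbr_unique wv (_ : e w x) (_ : e x v) (_ : e w u) (_ : e u v)) // sym.
Qed.

Hypothesis no_hexagon_through_v :
  forall s, is_cycle e s -> size s = 6 -> v \notin s.

Lemma second_nbhd_matching x y y' :
  x \in second_nbhd -> y \in second_nbhd -> y' \in second_nbhd ->
  e x y -> e x y' -> y = y'.
Proof.
move=> /second_nbhdP[xv nvx _] /second_nbhdP[yv nvy [u1 vu1 u1y]].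
move=> /second_nbhdP[y'v nvy' [u2 vu2 u2y']] xy xy'.
apply/eqP; apply: contraT => yy'.
have u12 : u1 != u2.
  apply: contraNneq nvx => u1u2; rewrite -u1u2 in u2y'.
  by rewrite -(common_nbr_unique yy' (_ : e y u1) u2y' (_ : e y x) xy') // sym.
suff cyc : is_cycle e [:: v; u1; y; x; y'; u2].
  by have := no_hexagon_through_v cyc erefl; rewrite inE eqxx.
rewrite /is_cycle /= vu1 u1y (sym y x) xy xy' (sym y' u2) u2y' (sym u2 v) vu2 /=.
move: (adj_neq vu1) (adj_neq vu2) (adj_neq xy) (adj_neq xy').
have ? : u1 != y by apply: contraNneq nvy => <-.
have ? : u1 != x by apply: contraNneq nvx => <-.
have ? : u1 != y' by apply: contraNneq nvy' => <-.
have ? : u2 != y by apply: contraNneq nvy => <-.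
have ? : u2 != x by apply: contraNneq nvx => <-.
have ? : u2 != y' by apply: contraNneq nvy' => <-.
rewrite !inE !negb_or => *; solve_distinct.
Qed.

Variable d : nat.
Hypothesis reg : regular e d.

Definition rainbow_ball (col : T -> 'I_d.+1) :=
  forall x, x \in closed_nbhd e v -> {in closed_nbhd e x &, injective col}.

Definition blocked (col : T -> 'I_d.+1) c (b : T) : bool :=
  [exists y in second_nbhd, e b y && (col y == c)].

Definition conflicts (col : T -> 'I_d.+1) : {set T} :=
  [set x in second_nbhd | blocked col (col x) x].

Definition nbr_color : T -> 'I_d.+1 := set_embed ord0 (nbhd e v) (~: [set ord0]).

Definition initial_color (x : T) : 'I_d.+1 :=
  if x == v then ord0 else if e v x then nbr_color x
  else if parent x is Some u then
    set_embed ord0 (nbhd e u :\ v) (~: [set ord0; nbr_color u]) x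
  else ord0.

Lemma rainbow_initial_color : rainbow_ball initial_color.
Proof.
have col_v : initial_color v = ord0 by rewrite /initial_color eqxx.
have col_nbr u : e v u -> initial_color u = nbr_color u.
  by move=> vu; rewrite /initial_color vu eq_sym (negbTE (adj_neq vu)).
have card_nbr : #|nbhd e v| <= #|~: [set ord0 : 'I_d.+1]|.
  by rewrite cardsC1 card_ord reg.
have nbr_neq0 u : e v u -> nbr_color u != ord0.
  move=> vu; have : nbr_color u \in ~: [set ord0] by apply: set_embed_in; rewrite ?inE.
  by rewrite !inE.
move=> x; rewrite inE => /predU1P[->|vx].
  rewrite closed_nbhdE; apply: injective_setU1 => [y z|y]; rewrite !inE => vy.
    by move=> vz; rewrite !col_nbr //; apply: set_embed_inj; rewrite ?inE.
  by rewrite col_v col_nbr // nbr_neq0.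
set C := ~: [set ord0; nbr_color x].
have card_children : #|nbhd e x :\ v| <= #|C|.
  have := cardsC [set ord0; nbr_color x]; rewrite cards2 eq_sym nbr_neq0 // card_ord.
  have := cardsD1 v (nbhd e x); rewrite [v \in _]inE -sym vx reg -/C; lia.
have col_child w : w \in nbhd e x :\ v -> initial_color w = set_embed ord0 (nbhd e x :\ v) C w.
  rewrite !inE => /andP[wv xw]; rewrite /initial_color (negbTE wv).
  have -> : e v w = false by apply/negP => vw; apply: (no_triangle vx xw); rewrite sym.
  by rewrite (parentP vx xw wv).
have child_col w : w \in nbhd e x :\ v -> initial_color w \in C.
  by move=> wN; rewrite col_child //; apply: set_embed_in.
have nbx : nbhd e x = v |: (nbhd e x :\ v) by rewrite setD1K // inE -sym.
rewrite closed_nbhdE nbx; apply: injective_setU1; first apply: injective_setU1.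
- move=> y z yN zN; rewrite !col_child //; exact: set_embed_inj.
- by move=> y /child_col; rewrite col_v /C !inE negb_or => /andP[].
- move=> y; rewrite in_setU1 => /predU1P[->|/child_col].
    by rewrite col_v col_nbr // eq_sym nbr_neq0.
  by rewrite (col_nbr x vx) /C !inE negb_or => /andP[].
Qed.

Lemma rainbow_tperm col u a a' :
  rainbow_ball col -> e v u -> e u a -> e u a' ->
  a \in second_nbhd -> a' \in second_nbhd -> rainbow_ball (col \o tperm a a').
Proof.
move=> rainbow vu ua ua' aW a'W x xN; apply: injective_tperm (rainbow x xN) _.
have [->|xu] := eqVneq x u; first by rewrite !inE ua ua' !orbT.
have notin b : e u b -> b \in second_nbhd -> b \notin closed_nbhd e x.
  by move=> ub bW; apply: contra xu => /(second_nbhd_closed_nbhd vu ub bW xN) ->.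
by rewrite (negbTE (notin a ua aW)) (negbTE (notin a' ua' a'W)).
Qed.

Lemma card_blocked_children col u uc :
  rainbow_ball col -> e v u -> e v uc ->
  #|[set b in nbhd e u | blocked col (col uc) b]| <= #|nbhd e v :\ u :\ uc|.
Proof.
move=> rainbow vu vuc; set B := [set b in _ | _].
pose witness b := odflt v [pick y in second_nbhd | e b y && (col y == col uc)].
pose h b := odflt v (parent (witness b)).
have hP b : b \in B -> exists2 y, y \in second_nbhd &
    [/\ e b y, col y = col uc, e v (h b) & e (h b) y].
  rewrite inE => /andP[_ /existsP[y0 y0P]]; rewrite /h /witness.
  case: pickP => [y /andP[yW /andP[by_ /eqP cy]]|/(_ y0)]; last by rewrite y0P.
  have /second_nbhdP[yv _ [p vp py]] := yW.
  by exists y; rewrite // (parentP vp py yv).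
have hN p : e v p -> p \in closed_nbhd e v by rewrite inE => ->; rewrite orbT.
have h_sub : h @: B \subset nbhd e v :\ u :\ uc.
  apply/subsetP => _ /imsetP[b bB ->]; have [y yW [by_ cy vh hy]] := hP b bB.
  have /second_nbhdP[_ nvy _] := yW.
  move: bB; rewrite !inE vh andbT => /andP[ub _]; apply/andP; split.
    apply: contraNneq nvy => huc; rewrite (rainbow uc (hN uc vuc) y uc) //.
      by rewrite !inE -huc hy orbT.
    by rewrite !inE eqxx.
  by apply/eqP => hu; apply: (no_triangle ub by_); rewrite -hu sym.
have h_inj : {in B &, injective h}.
  move=> b1 b2 b1B b2B h12.
  have [y1 y1W [b1y1 cy1 vh hy1]] := hP b1 b1B.
  have [y2 y2W [b2y2 cy2 _ hy2]] := hP b2 b2B.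
  have y12 : y1 = y2.
    rewrite -h12 in hy2.
    by apply: (rainbow _ (hN _ vh)); rewrite ?cy1 ?cy2 // !inE ?hy1 ?hy2 orbT.
  move: b1B b2B; rewrite !inE => /andP[ub1 _] /andP[ub2 _].
  have /second_nbhdP[_ nvy _] := y1W.
  have uy : u != y1 by apply: contraNneq nvy => <-.
  by apply: (common_nbr_unique uy ub1 b1y1 ub2); rewrite y12.
by rewrite -(card_in_imset h_inj) subset_leq_card.
Qed.

Lemma free_sibling col u a :
  rainbow_ball col -> e v u -> e u a -> a != v ->
  exists a', [/\ e u a', a' != v & ~~ blocked col (col a) a'].
Proof.
move=> rainbow vu ua av.
have vN : v \in closed_nbhd e v by rewrite inE eqxx.
have uN : u \in closed_nbhd e v by rewrite inE vu orbT.
have rainbow_u := rainbow u uN.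
have [uc ucN col_uc] :=
  in_inj_ord_surj (rainbow v vN) (card_closed_nbhd v irr reg) (col a).
have aNu : a \in closed_nbhd e u by rewrite inE ua orbT.
have vNu : v \in closed_nbhd e u by rewrite inE (sym u) vu orbT.
have uNu : u \in closed_nbhd e u by rewrite inE eqxx.
have vuc : e v uc.
  move: ucN; rewrite inE => /predU1P[ucv|//]; rewrite ucv in col_uc.
  by rewrite (rainbow_u v a vNu aNu col_uc) eqxx in av.
have ucu : uc != u.
  apply: contraTneq ua => ucu; rewrite ucu in col_uc.
  by rewrite (rainbow_u u a uNu aNu col_uc) irr.
have card_B := card_blocked_children rainbow vu vuc.
have : ~~ (nbhd e u :\ v \subset [set b in nbhd e u | blocked col (col uc) b]).
  apply: contraTN card_B => /subset_leq_card le_B; rewrite -ltnNge.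
  have := cardsD1 u (nbhd e v); have := cardsD1 uc (nbhd e v :\ u).
  have := cardsD1 v (nbhd e u).
  rewrite !inE ucu vuc -(sym v) vu !reg; lia.
case/subsetPn => a' a'N; rewrite inE col_uc; move: a'N; rewrite !inE.
by case/andP=> a'v ua'; rewrite ua' => a'_free; exists a'.
Qed.

Lemma conflicts_tperm col a a' b :
  a \in second_nbhd -> b \in second_nbhd -> ~~ e a a' ->
  e a b -> col b = col a -> col a' != col a -> ~~ blocked col (col a) a' ->
  #|conflicts (col \o tperm a a')| < #|conflicts col|.
Proof.
move=> aW bW naa' ab cb ca' a'_free.
have ab' : a != b := adj_neq ab.
have a'b : a' != b by apply: contraNneq naa' => ->.
have blockedP x y : x \in second_nbhd -> e y x -> col x = col a -> blocked col (col a) y.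
  by move=> xW yx cx; apply/existsP; exists x; rewrite xW yx cx eqxx.
have aC : a \in conflicts col by rewrite inE aW (blockedP b) ?cb.
rewrite (cardsD1 a (conflicts col)) aC add1n ltnS subset_leq_card //.
apply/subsetP => x; rewrite inE => /andP[xW /existsP[y /andP[yW /andP[xy /eqP]]]] /=.
have [xa | xa] := eqVneq x a.
  rewrite xa in xy *; rewrite (second_nbhd_matching aW yW bW xy ab) tpermL tpermD //.
  by move=> cba'; rewrite -cba' cb eqxx in ca'.
have [xa' | xa'] := eqVneq x a'.
  rewrite xa' in xy *.
  have ay : a != y by apply: contraNneq naa' => ->; rewrite sym.
  rewrite tpermR tpermD ?(adj_neq xy) // => cya.
  by rewrite (blockedP y) in a'_free.
rewrite (tpermD (z := x)) 1?eq_sym //.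
have [ya | ya] := eqVneq y a.
  rewrite ya in xy *.
  have xb : x = b by apply: (second_nbhd_matching aW xW bW); rewrite // sym.
  by rewrite tpermL xb cb => /eqP; rewrite (negbTE ca').
have [ya' | ya'] := eqVneq y a'.
  rewrite ya' in xy *.
  by rewrite tpermR => cax; rewrite (blockedP x) // sym in a'_free.
rewrite tpermD 1?eq_sym // => cyx.
rewrite in_setD1 xa [x \in conflicts _]inE xW.
by apply/existsP; exists y; rewrite yW xy cyx eqxx.
Qed.

Lemma reduce_conflicts col a : rainbow_ball col -> a \in conflicts col ->
  exists2 col', rainbow_ball col' & #|conflicts col'| < #|conflicts col|.
Proof.
move=> rainbow; rewrite inE => /andP[aW a_blocked].
have /second_nbhdP[av _ [u vu ua]] := aW.
have [a' [ua' a'v a'_free]] := free_sibling rainbow vu ua av.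
have naa' : ~~ e a a' by apply/negP => aa'; apply: (no_triangle ua aa'); rewrite sym.
have ca' : col a' != col a.
  have uN : u \in closed_nbhd e v by rewrite inE vu orbT.
  have aNu : a \in closed_nbhd e u by rewrite inE ua orbT.
  have a'Nu : a' \in closed_nbhd e u by rewrite inE ua' orbT.
  by apply: contraNneq a'_free => /(rainbow u uN a' a a'Nu aNu) ->.
move: a_blocked => /existsP[b /andP[bW /andP[ab /eqP cb]]].
exists (col \o tperm a a').
  exact: rainbow_tperm vu ua ua' aW (child_in_second_nbhd vu ua' a'v).
exact: conflicts_tperm aW bW naa' ab cb ca' a'_free.
Qed.

Lemma conflict_free_coloring :
  exists2 col, rainbow_ball col & conflicts col = set0.
Proof.
suff: forall n col, #|conflicts col| <= n -> rainbow_ball col ->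
    exists2 col', rainbow_ball col' & conflicts col' = set0.
  by move/(_ _ initial_color (leqnn _)); apply; exact: rainbow_initial_color.
elim=> [|n IH] col size_n rainbow.
  by exists col => //; apply/eqP; rewrite -cards_eq0 -leqn0.
have [no_conflict|[a aC]] := set_0Vmem (conflicts col); first by exists col.
have [col' rainbow' lt] := reduce_conflicts rainbow aC.
by apply: (IH col') => //; rewrite -ltnS (leq_trans lt).
Qed.

Lemma has_b_coloring_succ : has_b_coloring e d.+1.
Proof.
have [col rainbow no_conflict] := conflict_free_coloring.
pose S := closed_nbhd e v :|: second_nbhd.
have proper_S : {in S &, forall x y, e x y -> col x != col y}.
  have from_ball x y : x \in closed_nbhd e v -> e x y -> col x != col y.
    move=> xN xy; have xNx : x \in closed_nbhd e x by rewrite inE eqxx.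
    have yNx : y \in closed_nbhd e x by rewrite inE xy orbT.
    by apply: contraTneq xy => /(rainbow x xN x y xNx yNx) ->; rewrite irr.
  move=> x y; rewrite !in_setU => /orP[xN|xW] /orP[yN|yW] xy; try exact: from_ball.
    by rewrite eq_sym from_ball // sym.
  apply: contraT => /negPn/eqP cxy.
  have : x \in conflicts col.
    by rewrite inE xW; apply/existsP; exists y; rewrite yW xy cxy eqxx.
  by rewrite no_conflict inE.
have ball_sub w : w \in closed_nbhd e v -> closed_nbhd e w \subset S.
  move=> wN; apply/subsetP => z zNw; rewrite in_setU.
  have [->|zv] := eqVneq z v; first by rewrite inE eqxx.
  move: wN zNw; rewrite [w \in _]inE [z \in closed_nbhd e w]inE.
  case/predU1P => [->|vw]; first by move=> zN; rewrite [z \in _]inE zN.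
  case/predU1P => [->|wz]; first by rewrite inE vw orbT.
  by rewrite (child_in_second_nbhd vw wz zv) orbT.
have [c [proper_c c_S]] := proper_extend sym irr (fun x => eq_leq (reg x)) proper_S.
apply/existsP; exists c; apply: (b_coloring_of_rainbow (v := v)) => // [x|w wN].
  exact: card_closed_nbhd.
move=> y z yN zN; rewrite !c_S ?(subsetP (ball_sub w wN)) //; exact: rainbow wN y z yN zN.
Qed.

End SecondNeighbourhood.

Theorem mainTheorem3 (T : finType) (e : rel T) (d : nat) :
  simple_graph e -> 7 <= d -> regular e d -> girth_eq e 5 ->
  (exists v : T, forall s : seq T, is_cycle e s -> size s = 6 -> v \notin s) ->
  b_chromatic e = d.+1.
Proof.
move=> [sym irr] _ reg [_ no_short_cycle] [v no_hexagon].
have card_N x : #|closed_nbhd e x| = d.+1 := card_closed_nbhd x irr reg.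
apply/eqP; rewrite eqn_leq; apply/andP; split.
  by apply/bigmax_leqP => k /b_coloring_le; apply=> x; rewrite card_N.
have lt_d : d.+1 < #|T|.+1 by rewrite ltnS -(card_N v) max_card.
have := has_b_coloring_succ sym irr no_short_cycle no_hexagon reg.
exact: leq_bigmax_cond (Ordinal lt_d).
Qed.
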